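(* Let $(M,\varphi,\eta,\xi,g)$ be a Kenmotsu manifold of dimension $2n+1$ with Levi-Civita connection $\nabla$. Let $(U;x^0,x^1,\dots,x^{2n})$ be a local coordinate chart adapted to the foliation generated by $\xi$, so that $\xi=\partial/\partial x^0$ on $U$, and put $\eta_i=\eta(\partial/\partial x^i)$, $\frac{\delta}{\delta x^i}=\frac{\partial}{\partial x^i}-\eta_i\frac{\partial}{\partial x^0}$, $g_{ij}=g\big(\frac{\delta}{\delta x^i},\frac{\delta}{\delta x^j}\big)$ for $i,j=1,\dots,2n$, and let $(g^{kl})$ be the inverse matrix of $(g_{ij})$. Then on $U$: $$\nabla_{\frac{\delta}{\delta x^i}}\frac{\delta}{\delta x^j}=\Gamma_{ij}^k\frac{\delta}{\delta x^k}-g_{ij}\frac{\partial}{\partial x^0},\qquad \nabla_{\frac{\partial}{\partial x^0}}\frac{\delta}{\delta x^i}=\nabla_{\frac{\delta}{\delta x^i}}\frac{\partial}{\partial x^0}=\frac{\delta}{\delta x^i},\qquad \nabla_{\frac{\partial}{\partial x^0}}\frac{\partial}{\partial x^0}=0,$$ where $\Gamma_{ij}^k=\frac12 g^{kl}\Big\{\frac{\delta g_{lj}}{\delta x^i}+\frac{\delta g_{il}}{\delta x^j}-\frac{\delta g_{ij}}{\delta x^l}\Big\}$ (summation over repeated indices).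
   Context: An almost contact metric structure $(\varphi,\eta,\xi,g)$ on a $(2n+1)$-manifold $M$ consists of a $(1,1)$-tensor $\varphi$, a vector field $\xi$, a $1$-form $\eta$ and a Riemannian metric $g$ with $\varphi^2X=-X+\eta(X)\xi$, $\eta(\xi)=1$, $\eta\circ\varphi=0$, $\varphi\xi=0$, $g(\varphi X,\varphi Y)=g(X,Y)-\eta(X)\eta(Y)$, and $\eta(X)=g(\xi,X)$. It is a Kenmotsu manifold if $(\nabla_X\varphi)Y=g(\varphi X,Y)\xi-\eta(Y)\varphi X$ for all vector fields $X,Y$, where $\nabla$ is the Levi-Civita connection of $g$. *)

From HB Require Import structures.
From mathcomp Require Import all_boot all_order all_algebra.
From mathcomp Require Import all_classical all_reals all_analysis.
Set Implicit Arguments. Unset Strict Implicit. Unset Printing Implicit Defensive.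
Import Order.TTheory GRing.Theory Num.Theory.
Import numFieldNormedType.Exports.
Local Open Scope classical_set_scope.
Local Open Scope ring_scope.

Section Kenmotsu.
Variables (R : realType) (n : nat).

(* coordinate indices 0..2n ; index 0 is x^0 *)
Local Notation m := (n.*2.+1).
(* points of the chart domain (coordinates (x^0,...,x^2n)) *)
Local Notation pt := 'rV[R]_m.
(* tangent vectors: column vectors of components w.r.t. d/dx^a *)
Local Notation vec := 'cV[R]_m.

Definition ecoord (a : 'I_m) : vec := delta_mx a 0.

Definition partial (a : 'I_m) (f : pt -> R) : pt -> R :=
  fun x => derive f x (delta_mx 0 a : pt).

Definition iter_partial (s : seq 'I_m) (f : pt -> R) : pt -> R :=
  foldr partial f s.

Definition smooth_on (U : set pt) (f : pt -> R) : Prop :=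
  forall (s : seq 'I_m) (x : pt), U x -> differentiable (iter_partial s f) x.

Definition smooth_vf (U : set pt) (X : pt -> vec) : Prop :=
  forall c : 'I_m, smooth_on U (fun y => X y c 0).

(* Christoffel symbols of the Levi-Civita connection of the metric G
   (G x a b = g(d/dx^a, d/dx^b)):
   Gamma^c_{ab} = 1/2 g^{cd} (d_a g_{db} + d_b g_{ad} - d_d g_{ab}) *)
Definition christoffel (G : pt -> 'M[R]_m) (x : pt) (c a b : 'I_m) : R :=
  2^-1 * \sum_(d < m) invmx (G x) c d *
    (partial a (fun y => G y d b) x + partial b (fun y => G y a d) x
     - partial d (fun y => G y a b) x).

Definition levi_civita (G : pt -> 'M[R]_m) (X Y : pt -> vec) (x : pt) : vec :=
  \col_(c < m) (\sum_(a < m) X x a 0 * partial a (fun y => Y y c 0) x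
     + \sum_(a < m) \sum_(b < m) christoffel G x c a b * X x a 0 * Y x b 0).

Definition gmet (G : pt -> 'M[R]_m) (x : pt) (X Y : vec) : R :=
  ((X^T *m G x *m Y) 0 0).

Definition riemannian_on (U : set pt) (G : pt -> 'M[R]_m) : Prop :=
  (forall a b : 'I_m, smooth_on U (fun y => G y a b)) /\
  (forall x, U x -> (G x)^T = G x /\
     forall v : vec, v != 0 -> 0 < gmet G x v v).

(* almost contact metric structure (phi, eta, xi, g) on U;
   Phi x = matrix of phi (phi(d_b) = sum_a Phi x a b d_a),
   eta x = row of components eta_a = eta(d_a), xi x = components of xi *)
Definition almost_contact_metric_on (U : set pt) (Phi : pt -> 'M[R]_m)
    (eta : pt -> 'rV[R]_m) (xi : pt -> vec) (G : pt -> 'M[R]_m) : Prop :=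
  riemannian_on U G /\
  (forall a b : 'I_m, smooth_on U (fun y => Phi y a b)) /\
  (forall a : 'I_m, smooth_on U (fun y => eta y 0 a)) /\
  (forall a : 'I_m, smooth_on U (fun y => xi y a 0)) /\
  (forall x, U x ->
     [/\ Phi x *m Phi x = - 1%:M + xi x *m eta x,
         eta x *m xi x = 1%:M,
         eta x *m Phi x = 0,
         Phi x *m xi x = 0 &
         (forall X Y : vec, gmet G x (Phi x *m X) (Phi x *m Y)
                            = gmet G x X Y - (eta x *m X) 0 0 * (eta x *m Y) 0 0)
         /\ (forall X : vec, (eta x *m X) 0 0 = gmet G x (xi x) X)]).

(* Kenmotsu condition: (nabla_X phi) Y = g(phi X, Y) xi - eta(Y) phi X *)
Definition kenmotsu_on (U : set pt) (Phi : pt -> 'M[R]_m)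
    (eta : pt -> 'rV[R]_m) (xi : pt -> vec) (G : pt -> 'M[R]_m) : Prop :=
  almost_contact_metric_on U Phi eta xi G /\
  forall X Y : pt -> vec, smooth_vf U X -> smooth_vf U Y ->
  forall x, U x ->
    levi_civita G X (fun y => Phi y *m Y y) x - Phi x *m levi_civita G X Y x
    = gmet G x (Phi x *m X x) (Y x) *: xi x
      - (eta x *m Y x) 0 0 *: (Phi x *m X x).

(* horizontal index i = 1..2n, encoded by i : 'I_(2n) |-> lift ord0 i *)
Definition hidx (i : 'I_(n.*2)) : 'I_m := lift ord0 i.

Definition dvf (eta : pt -> 'rV[R]_m) (i : 'I_(n.*2)) : pt -> vec :=
  fun x => ecoord (hidx i) - eta x 0 (hidx i) *: ecoord ord0.

Definition dpartial (eta : pt -> 'rV[R]_m) (i : 'I_(n.*2)) (f : pt -> R) : pt -> R :=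
  fun x => partial (hidx i) f x - eta x 0 (hidx i) * partial ord0 f x.

Definition hmet (G : pt -> 'M[R]_m) (eta : pt -> 'rV[R]_m)
    (i j : 'I_(n.*2)) : pt -> R :=
  fun x => gmet G x (dvf eta i x) (dvf eta j x).

Definition hmetmx (G : pt -> 'M[R]_m) (eta : pt -> 'rV[R]_m) (x : pt)
  : 'M[R]_(n.*2) := \matrix_(i, j) hmet G eta i j x.

Definition hchristoffel (G : pt -> 'M[R]_m) (eta : pt -> 'rV[R]_m) (x : pt)
    (k i j : 'I_(n.*2)) : R :=
  2^-1 * \sum_(l < n.*2) invmx (hmetmx G eta x) k l *
    (dpartial eta i (hmet G eta l j) x + dpartial eta j (hmet G eta i l) x
     - dpartial eta l (hmet G eta i j) x).

End Kenmotsu.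

From HB Require Import structures.
From mathcomp Require Import all_boot all_order all_algebra.
From mathcomp Require Import all_classical all_reals all_analysis.
From mathcomp Require Import ring lra.
Import Order.TTheory GRing.Theory Num.Theory.
Import numFieldNormedType.Exports.
Local Open Scope classical_set_scope.
Local Open Scope ring_scope.

(* In the adapted chart xi = d/dx^0, so eta_a = g_0a and g_00 = 1.  Applied to
   X = d/dx^a and Y = xi, the Kenmotsu identity gives phi (nabla_a xi - d/dx^a) = 0;
   since ker phi is spanned by xi and eta (nabla_a xi) = 1/2 d_a g_00 = 0, this says
   nabla_a xi = d/dx^a - eta_a xi, i.e. Gamma^c_a0 = delta^c_a - eta_a delta^c_0.
   Lowering the upper index and splitting into the parts symmetric and antisymmetric
   in the two free indices gives d_0 g_ab = 2 (g_ab - eta_a eta_b) and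
   d_a eta_b = d_b eta_a.  For
   nabla_(delta_i) delta_j both sides are compared after lowering with g: the row
   of xi is -g_ij because g (xi, delta_k) = 0, and since g (d/dx^p, delta_k) = g_pk
   the horizontal rows reduce to the Christoffel formula of (g_ij). *)

Set Implicit Arguments. Unset Strict Implicit.

Lemma sum_deltal (R : pzSemiRingType) k (b : 'I_k) (F : 'I_k -> R) :
  \sum_(a < k) (a == b)%:R * F a = F b.
Proof.
rewrite (bigD1 b) //= eqxx mul1r big1 ?addr0 // => a /negbTE ->; exact: mul0r.
Qed.

Lemma sum_deltar (R : pzSemiRingType) k (b : 'I_k) (F : 'I_k -> R) :
  \sum_(a < k) F a * (a == b)%:R = F b.
Proof.
by rewrite -[RHS](sum_deltal b); apply: eq_bigr => a _; rewrite mulr_natl mulr_natr.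
Qed.

Lemma sum_delta_mulr (R : pzSemiRingType) k (b : 'I_k) (F : 'I_k -> R) a :
  \sum_(c < k) F c * ((c == b)%:R * a) = F b * a.
Proof.
by rewrite -(sum_deltar b F) big_distrl; apply: eq_bigr => c _; rewrite mulrA.
Qed.

Lemma comb_colE (R : pzRingType) m k (w : 'I_k -> R) (V : 'I_k -> 'cV[R]_m) s v l :
  (\sum_j w j *: V j - s *: v) l 0 = \sum_j w j * V j l 0 - s * v l 0.
Proof. by rewrite !mxE summxE; under eq_bigr do rewrite mxE. Qed.

Lemma sum_mul_inverse (R : comPzRingType) k (A B : 'M[R]_k) (T : 'I_k -> R) l :
  A *m B = 1%:M -> \sum_c A l c * \sum_d B c d * T d = T l.
Proof.
move=> AB; have -> : \sum_c A l c * \sum_d B c d * T d = \sum_d (A *m B) l d * T d.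
  under [RHS]eq_bigr => d _ do rewrite mxE big_distrl /=.
  rewrite exchange_big /=; apply: eq_bigr => c _; rewrite mulr_sumr.
  by apply: eq_bigr => d _; rewrite mulrA.
rewrite AB; under eq_bigr => d _ do rewrite mxE eq_sym.
exact: sum_deltal.
Qed.

Lemma posdef_unitmx (R : numFieldType) k (A : 'M[R]_k) :
  (forall v : 'cV[R]_k, v != 0 -> 0 < (v^T *m A *m v) 0 0) -> A \in unitmx.
Proof.
move=> pdA; rewrite -row_free_unit; apply: inj_row_free => v vA.
apply/eqP; apply: contraT => v0.
have : v^T != 0 by apply: contra v0 => /eqP h; rewrite -[v]trmxK h trmx0.
by move/pdA; rewrite trmxK vA mul0mx mxE ltxx.
Qed.

Section Coordinates.
Variables (R : realType) (n : nat).
Local Notation pt := 'rV[R]_(n.*2.+1).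
Local Notation vec := 'cV[R]_(n.*2.+1).

Lemma ecoordE (a c : 'I_(n.*2.+1)) : ecoord R a c 0 = (c == a)%:R.
Proof. by rewrite /ecoord mxE eqxx andbT. Qed.

Lemma sum_ecoordl (b : 'I_(n.*2.+1)) (F : 'I_(n.*2.+1) -> R) :
  \sum_a ecoord R b a 0 * F a = F b.
Proof. by under eq_bigr => a _ do rewrite ecoordE; exact: sum_deltal. Qed.

Lemma sum_ecoordr (b : 'I_(n.*2.+1)) (F : 'I_(n.*2.+1) -> R) :
  \sum_a F a * ecoord R b a 0 = F b.
Proof. by under eq_bigr => a _ do rewrite ecoordE; exact: sum_deltar. Qed.

Lemma mulmx_ecoord k (A : 'M[R]_(k, n.*2.+1)) i a : (A *m ecoord R a) i 0 = A i a.
Proof. by rewrite mxE sum_ecoordr. Qed.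

Lemma dvfE (eta : pt -> 'rV[R]_(n.*2.+1)) i x c :
  dvf eta i x c 0 = (c == hidx i)%:R - eta x 0 (hidx i) * (c == ord0)%:R.
Proof. by rewrite /dvf !mxE !andbT. Qed.

Lemma sum_dvfl (eta : pt -> 'rV[R]_(n.*2.+1)) i x (F : 'I_(n.*2.+1) -> R) :
  \sum_a dvf eta i x a 0 * F a = F (hidx i) - eta x 0 (hidx i) * F ord0.
Proof.
under eq_bigr => a _ do rewrite dvfE mulrBl -mulrA.
by rewrite sumrB sum_deltal -mulr_sumr sum_deltal.
Qed.

Lemma sum_dvfr (eta : pt -> 'rV[R]_(n.*2.+1)) i x (F : 'I_(n.*2.+1) -> R) :
  \sum_a F a * dvf eta i x a 0 = F (hidx i) - eta x 0 (hidx i) * F ord0.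
Proof. by rewrite -sum_dvfl; apply: eq_bigr => a _; rewrite mulrC. Qed.

Lemma gmetE (G : pt -> 'M[R]_(n.*2.+1)) x (X Y : vec) :
  gmet G x X Y = \sum_a X a 0 * \sum_b G x a b * Y b 0.
Proof.
rewrite /gmet !mxE; under eq_bigr => b _ do rewrite !mxE big_distrl /=.
rewrite exchange_big /=; apply: eq_bigr => a _; rewrite mulr_sumr.
by apply: eq_bigr => b _; rewrite !mxE mulrA.
Qed.

Lemma gmetC (G : pt -> 'M[R]_(n.*2.+1)) x (X Y : vec) :
  (G x)^T = G x -> gmet G x X Y = gmet G x Y X.
Proof.
move=> Gsym; rewrite /gmet -[in RHS]Gsym -[in RHS](trmxK (_ *m _ *m _)) [in RHS]mxE.
by rewrite !trmx_mul !trmxK mulmxA.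
Qed.

Lemma levi_civitaE (G : pt -> 'M[R]_(n.*2.+1)) X Y x c :
  levi_civita G X Y x c 0 = \sum_a X x a 0 * partial a (fun y => Y y c 0) x
     + \sum_a \sum_b christoffel G x c a b * X x a 0 * Y x b 0.
Proof. by rewrite /levi_civita mxE. Qed.

Lemma partial_cst (c : R) a (x : pt) : partial a (fun _ => c) x = 0.
Proof. exact: derive_cst. Qed.

Lemma partial_eq_on (U : set pt) (f g : pt -> R) a x :
  open U -> U x -> (forall y, U y -> f y = g y) -> partial a f x = partial a g x.
Proof.
move=> oU Ux fg; apply: near_eq_derive.
have nU : nbhs x U by apply: open_nbhs_nbhs.
by apply: filterS nU => y Uy; apply: fg.
Qed.

Lemma partialBM (f g h : pt -> R) a x :
  derivable f x (delta_mx 0 a) -> derivable g x (delta_mx 0 a) ->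
  derivable h x (delta_mx 0 a) ->
  partial a (fun y => f y - g y * h y) x
  = partial a f x - (g x * partial a h x + h x * partial a g x).
Proof.
move=> df dg dh; rewrite /partial.
have -> : (fun y => f y - g y * h y) = f - g * h by [].
by rewrite deriveB ?deriveM //; exact: derivableM.
Qed.

Lemma smooth_on_cst (U : set pt) (c : R) : smooth_on U (fun _ => c).
Proof.
have iter_cst s : iter_partial s (fun _ : pt => c) = fun _ => if s is [::] then c else 0.
  elim: s => [//|a s IH] /=; apply/funext => y.
  by rewrite /partial IH; case: s {IH} => [|b s]; exact: derive_cst.
by move=> s y _; rewrite iter_cst; exact: differentiable_cst.
Qed.

Lemma smooth_on_derivable (U : set pt) f x :
  smooth_on U f -> U x -> forall v, derivable f x v.
Proof. by move=> sf Ux v; apply: diff_derivable; exact: (sf [::] x Ux). Qed.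

Lemma christoffel_lower (G : pt -> 'M[R]_(n.*2.+1)) x l a b :
  G x \in unitmx ->
  \sum_c G x l c * christoffel G x c a b
  = 2^-1 * (partial a (fun y => G y l b) x + partial b (fun y => G y a l) x
            - partial l (fun y => G y a b) x).
Proof.
move=> Gu; rewrite /christoffel; under eq_bigr => c _ do rewrite mulrCA.
by rewrite -mulr_sumr (sum_mul_inverse _ _ (mulmxV Gu)).
Qed.

Lemma christoffelC (G : pt -> 'M[R]_(n.*2.+1)) x :
  (forall a b c, partial a (fun y => G y b c) x = partial a (fun y => G y c b) x) ->
  forall c a b, christoffel G x c a b = christoffel G x c b a.
Proof.
move=> dGC c a b; rewrite /christoffel; congr (_ * _); apply: eq_bigr => d _.
by rewrite (dGC a d b) (dGC b a d) (dGC d a b); ring.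
Qed.

Lemma levi_civita_coord (G : pt -> 'M[R]_(n.*2.+1)) a b x c :
  levi_civita G (fun _ => ecoord R a) (fun _ => ecoord R b) x c 0 = christoffel G x c a b.
Proof.
rewrite levi_civitaE big1 ?add0r => [|a' _]; last by rewrite partial_cst mulr0.
by under eq_bigr => a' _ do rewrite sum_ecoordr; exact: sum_ecoordr.
Qed.

Lemma levi_civita_eq0_on (U : set pt) (G : pt -> 'M[R]_(n.*2.+1)) X Y x :
  open U -> U x -> (forall y, U y -> Y y = 0) -> levi_civita G X Y x = 0.
Proof.
move=> oU Ux Y0; apply/colP => c; rewrite levi_civitaE mxE big1 => [|a _].
  by rewrite add0r big1 // => a _; apply: big1 => b _; rewrite Y0 // mxE mulr0.
rewrite (partial_eq_on (g := fun _ => 0) a oU Ux) ?partial_cst ?mulr0 //.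
by move=> y Uy; rewrite Y0 // mxE.
Qed.

Lemma dvf_hidx (eta : pt -> 'rV[R]_(n.*2.+1)) l x k :
  dvf eta l x (hidx k) 0 = (k == l)%:R.
Proof.
rewrite dvfE /hidx (inj_eq lift_inj) [lift _ _ == _]eq_sym.
by rewrite (negbTE (neq_lift _ _)) mulr0 subr0.
Qed.

End Coordinates.

Section AdaptedChart.
Variables (R : realType) (n : nat) (U : set 'rV[R]_(n.*2.+1)).
Variables (Phi G : 'rV[R]_(n.*2.+1) -> 'M[R]_(n.*2.+1)).
Variables (eta : 'rV[R]_(n.*2.+1) -> 'rV[R]_(n.*2.+1)).
Variables (xi : 'rV[R]_(n.*2.+1) -> 'cV[R]_(n.*2.+1)).
Hypotheses (openU : open U) (kenmotsuU : kenmotsu_on U Phi eta xi G).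
Hypothesis xi_coord : forall y, U y -> xi y = ecoord R ord0.

Local Notation e0 := (ecoord R ord0).

Lemma G_smooth a b : smooth_on U (fun y => G y a b).
Proof. by case: kenmotsuU => [[[]]]. Qed.

Lemma eta_smooth a : smooth_on U (fun y => eta y 0 a).
Proof. by case: kenmotsuU => [[_ [_ []]]]. Qed.

Lemma G_tr y : U y -> (G y)^T = G y.
Proof. by case: kenmotsuU => [[[_ GU] _] _] /GU[]. Qed.

Lemma G_posdef y v : U y -> v != 0 -> 0 < gmet G y v v.
Proof. by case: kenmotsuU => [[[_ GU] _] _] /GU[_]; apply. Qed.

Lemma G_sym y a b : U y -> G y a b = G y b a.
Proof. by move=> Uy; rewrite -[in LHS](G_tr Uy) mxE. Qed.

Lemma almost_contact_on y : U y ->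
  [/\ Phi y *m Phi y = - 1%:M + e0 *m eta y, eta y *m e0 = 1%:M,
      eta y *m Phi y = 0, Phi y *m e0 = 0 &
      forall v, (eta y *m v) 0 0 = gmet G y e0 v].
Proof.
move=> Uy; have [[_ [_ [_ [_ /(_ y Uy) acm]]]] _] := kenmotsuU.
by move: acm; rewrite xi_coord // => -[? ? ? ? [_ ?]].
Qed.

Lemma eta_G y a : U y -> eta y 0 a = G y ord0 a.
Proof.
move=> Uy; have [_ _ _ _ /(_ (ecoord R a))] := almost_contact_on Uy.
by rewrite mulmx_ecoord gmetE sum_ecoordl sum_ecoordr.
Qed.

Lemma eta_xi y : U y -> eta y 0 ord0 = 1.
Proof.
move=> Uy; have [_ /matrixP /(_ 0 0) + _ _ _] := almost_contact_on Uy.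
by rewrite mulmx_ecoord !mxE eqxx.
Qed.

Lemma G_xi_xi y : U y -> G y ord0 ord0 = 1.
Proof. by move=> Uy; rewrite -eta_G ?eta_xi. Qed.

Lemma Phi_kernel y v : U y -> Phi y *m v = 0 -> v = (eta y *m v) 0 0 *: e0.
Proof.
move=> Uy Pv; have [PP _ _ _ _] := almost_contact_on Uy.
have := congr1 (mulmx (Phi y)) Pv.
rewrite mulmx0 mulmxA PP mulmxDl mulNmx mul1mx -mulmxA => /eqP.
rewrite addrC subr_eq0 eq_sym => /eqP {1}->.
by rewrite {1}[eta y *m v]mx11_scalar mul_mx_scalar.
Qed.

Lemma hmet_on y p q : U y ->
  hmet G eta p q y = G y (hidx p) (hidx q) - eta y 0 (hidx p) * eta y 0 (hidx q).
Proof.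
move=> Uy; rewrite /hmet gmetE sum_dvfl !sum_dvfr (G_sym (hidx p) ord0 Uy).
by rewrite -!(eta_G _ Uy) eta_xi //; ring.
Qed.

Variable x : 'rV[R]_(n.*2.+1).
Hypothesis Ux : U x.

Lemma G_unit : G x \in unitmx.
Proof. by apply: posdef_unitmx => v; exact: (G_posdef Ux). Qed.

Lemma G_derivable a b : forall v, derivable (fun y => G y a b) x v.
Proof. exact: smooth_on_derivable (G_smooth a b) Ux. Qed.

Lemma eta_derivable a : forall v, derivable (fun y => eta y 0 a) x v.
Proof. exact: smooth_on_derivable (eta_smooth a) Ux. Qed.

Lemma partial_G_sym a b c :
  partial a (fun y => G y b c) x = partial a (fun y => G y c b) x.
Proof. by apply: (partial_eq_on _ openU Ux) => y Uy; exact: G_sym. Qed.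

Lemma partial_G_xi_xi a : partial a (fun y => G y ord0 ord0) x = 0.
Proof.
rewrite (partial_eq_on (g := fun _ => 1) a openU Ux) ?partial_cst //.
exact: G_xi_xi.
Qed.

Lemma partial_eta a b :
  partial a (fun y => eta y 0 b) x = partial a (fun y => G y ord0 b) x.
Proof. by apply: (partial_eq_on _ openU Ux) => y Uy; exact: eta_G. Qed.

Lemma kenmotsu_coord_xi a :
  Phi x *m (levi_civita G (fun _ => ecoord R a) (fun _ => e0) x - ecoord R a) = 0.
Proof.
have [_ _ etaP _ etag] := almost_contact_on Ux.
have cst v : smooth_vf U (fun _ => v) by move=> c; exact: smooth_on_cst.
case: kenmotsuU => _ /(_ _ _ (cst (ecoord R a)) (cst e0) x Ux).
rewrite (levi_civita_eq0_on _ _ openU Ux); last first.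
  by move=> y Uy; have [] := almost_contact_on Uy.
rewrite xi_coord // sub0r (gmetC _ _ (G_tr Ux)) -etag mulmxA etaP mul0mx mxE.
rewrite scale0r sub0r mulmx_ecoord eta_xi // scale1r => /oppr_inj nablaP.
by rewrite mulmxBr nablaP subrr.
Qed.

Lemma nabla_coord_xi a :
  levi_civita G (fun _ => ecoord R a) (fun _ => e0) x = ecoord R a - eta x 0 a *: e0.
Proof.
have eta_L : (eta x *m levi_civita G (fun _ => ecoord R a) (fun _ => e0) x) 0 0 = 0.
  have [_ _ _ _ ->] := almost_contact_on Ux.
  rewrite gmetE sum_ecoordl; under eq_bigr => b _ do rewrite levi_civita_coord.
  by rewrite christoffel_lower ?G_unit // partial_G_xi_xi add0r subrr mulr0.
have := Phi_kernel Ux (kenmotsu_coord_xi a).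
rewrite mulmxBr mxE eta_L mxE mulmx_ecoord add0r => /eqP.
by rewrite subr_eq => /eqP ->; rewrite scaleNr addrC.
Qed.

Lemma christoffel_xi a c :
  christoffel G x c a ord0 = (c == a)%:R - eta x 0 a * (c == ord0)%:R.
Proof. by rewrite -levi_civita_coord nabla_coord_xi !mxE ?eqxx ?andbT. Qed.

Lemma christoffel_xi_lower l a :
  2^-1 * (partial a (fun y => G y l ord0) x + partial ord0 (fun y => G y a l) x
          - partial l (fun y => G y a ord0) x) = G x l a - eta x 0 a * eta x 0 l.
Proof.
rewrite -christoffel_lower ?G_unit //.
under eq_bigr => c _ do rewrite christoffel_xi mulrBr mulrCA.
by rewrite sumrB sum_deltar -mulr_sumr sum_deltar (G_sym l ord0 Ux) -eta_G.
Qed.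

Lemma partial_G_xi_swap a b :
  partial a (fun y => G y b ord0) x = partial b (fun y => G y a ord0) x.
Proof.
have := christoffel_xi_lower b a; have := christoffel_xi_lower a b.
rewrite (partial_G_sym ord0 b a) (G_sym a b Ux) [eta x 0 b * _]mulrC.
lra.
Qed.

Lemma partial_xi_G a b :
  partial ord0 (fun y => G y a b) x = 2 * (G x a b - eta x 0 a * eta x 0 b).
Proof.
have := christoffel_xi_lower b a.
rewrite (partial_G_xi_swap a b) (G_sym b a Ux).
lra.
Qed.

Lemma partial_xi_G_xi b : partial ord0 (fun y => G y ord0 b) x = 0.
Proof. by rewrite partial_xi_G -(eta_G b Ux) eta_xi // mul1r subrr mulr0. Qed.

(* d eta = 0, as eta_b = G_0b on U *)
Lemma partial_eta_closed a b :
  partial a (fun y => G y ord0 b) x = partial b (fun y => G y ord0 a) x.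
Proof. by rewrite partial_G_sym partial_G_xi_swap partial_G_sym. Qed.

Lemma partial_dvf j a c : partial a (fun y => dvf eta j y c 0) x
    = - ((c == ord0)%:R * partial a (fun y => G y ord0 (hidx j)) x).
Proof.
have -> : (fun y => dvf eta j y c 0)
          = (fun y => (c == hidx j)%:R - eta y 0 (hidx j) * (c == ord0)%:R).
  by apply/funext => y; rewrite dvfE.
rewrite partialBM ?partial_cst ?partial_eta; first ring.
- exact: derivable_cst.
- exact: eta_derivable.
- exact: derivable_cst.
Qed.

Lemma nabla_xi_xi : levi_civita G (fun _ => e0) (fun _ => e0) x = 0.
Proof. by rewrite nabla_coord_xi eta_xi // scale1r subrr. Qed.

Lemma nabla_dvf_xi i : levi_civita G (dvf eta i) (fun _ => e0) x = dvf eta i x.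
Proof.
apply/colP => c; rewrite levi_civitaE big1 ?add0r => [|a _]; last first.
  by rewrite partial_cst mulr0.
under eq_bigr => a _ do rewrite sum_ecoordr christoffel_xi.
by rewrite sum_dvfr dvfE eta_xi //; ring.
Qed.

Lemma nabla_xi_dvf i : levi_civita G (fun _ => e0) (dvf eta i) x = dvf eta i x.
Proof.
apply/colP => c; rewrite levi_civitaE sum_ecoordl partial_dvf partial_xi_G_xi.
under eq_bigr => a _ do rewrite sum_dvfr.
rewrite sumrB -mulr_sumr !sum_ecoordr (christoffelC partial_G_sym c ord0 (hidx i)).
by rewrite !christoffel_xi dvfE eta_xi //; ring.
Qed.

Lemma hmetmx_unit : hmetmx G eta x \in unitmx.
Proof.
pose D : 'M[R]_(n.*2.+1, n.*2) := \matrix_(c, k) dvf eta k x c 0.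
have D_col k : dvf eta k x = D *m delta_mx k 0.
  by rewrite -colE; apply/colP => c; rewrite !mxE.
have -> : hmetmx G eta x = D^T *m G x *m D.
  apply/matrixP => p q; rewrite mxE /hmet /gmet !D_col trmx_mul trmx_delta.
  have -> : (delta_mx 0 p : 'rV[R]_(n.*2)) *m D^T *m G x *m (D *m delta_mx q 0)
            = delta_mx 0 p *m (D^T *m G x *m D) *m (delta_mx q 0 : 'cV[R]_(n.*2)).
    by rewrite !mulmxA.
  by rewrite -rowE -colE !mxE.
apply: posdef_unitmx => v v0.
have -> : v^T *m (D^T *m G x *m D) *m v = (D *m v)^T *m G x *m (D *m v).
  by rewrite trmx_mul !mulmxA.
apply: (G_posdef Ux); apply: contra v0 => /eqP Dv0; apply/eqP/colP => k.
have /colP/(_ (hidx k)) := Dv0; rewrite !mxE.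
by under eq_bigr => l _ do rewrite mxE dvf_hidx eq_sym; rewrite sum_deltal.
Qed.

Lemma partial_hmet a p q : partial a (hmet G eta p q) x
    = partial a (fun y => G y (hidx p) (hidx q)) x
      - (eta x 0 (hidx p) * partial a (fun y => G y ord0 (hidx q)) x
         + eta x 0 (hidx q) * partial a (fun y => G y ord0 (hidx p)) x).
Proof.
rewrite (partial_eq_on (g := fun y => G y (hidx p) (hidx q)
                                  - eta y 0 (hidx p) * eta y 0 (hidx q)) a openU Ux).
  by rewrite partialBM ?partial_eta //; [apply: G_derivable | apply: eta_derivable ..].
by move=> y; exact: hmet_on.
Qed.

Lemma dpartial_hmet i p q : dpartial eta i (hmet G eta p q) x
  = partial (hidx i) (fun y => G y (hidx p) (hidx q)) x
    - eta x 0 (hidx p) * partial (hidx i) (fun y => G y ord0 (hidx q)) x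
    - eta x 0 (hidx q) * partial (hidx i) (fun y => G y ord0 (hidx p)) x
    - 2 * eta x 0 (hidx i) * hmet G eta p q x.
Proof.
by rewrite /dpartial !partial_hmet partial_xi_G !partial_xi_G_xi hmet_on //; ring.
Qed.

Lemma nabla_dvf_dvfE i j c : levi_civita G (dvf eta i) (dvf eta j) x c 0
   = christoffel G x c (hidx i) (hidx j)
     + (c == ord0)%:R * (2 * eta x 0 (hidx i) * eta x 0 (hidx j)
                         - partial (hidx i) (fun y => G y ord0 (hidx j)) x)
     - (c == hidx i)%:R * eta x 0 (hidx j) - (c == hidx j)%:R * eta x 0 (hidx i).
Proof.
rewrite levi_civitaE; under eq_bigr => a _ do rewrite partial_dvf.
rewrite sum_dvfl partial_xi_G_xi.
under [X in _ + X = _]eq_bigr => a _ do rewrite sum_dvfr.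
rewrite sumrB -mulr_sumr !sum_dvfr (christoffelC partial_G_sym c ord0 (hidx j)).
by rewrite !christoffel_xi eta_xi //; ring.
Qed.

Lemma G_nabla_dvf_dvf i j l : (G x *m levi_civita G (dvf eta i) (dvf eta j) x) l 0
   = 2^-1 * (partial (hidx i) (fun y => G y l (hidx j)) x
             + partial (hidx j) (fun y => G y (hidx i) l) x
             - partial l (fun y => G y (hidx i) (hidx j)) x)
     + G x l ord0 * (2 * eta x 0 (hidx i) * eta x 0 (hidx j)
                     - partial (hidx i) (fun y => G y ord0 (hidx j)) x)
     - G x l (hidx i) * eta x 0 (hidx j) - G x l (hidx j) * eta x 0 (hidx i).
Proof.
rewrite mxE; under eq_bigr => c _ do rewrite nabla_dvf_dvfE -!addrA !mulrDr !mulrN.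
rewrite !big_split /= !sumrN !sum_delta_mulr christoffel_lower ?G_unit //.
ring.
Qed.

Lemma G_dvf l k :
  (G x *m dvf eta k x) l 0 = G x l (hidx k) - eta x 0 (hidx k) * G x l ord0.
Proof. by rewrite mxE sum_dvfr. Qed.

Lemma G_dvf_xi k : (G x *m dvf eta k x) ord0 0 = 0.
Proof. by rewrite G_dvf -eta_G // G_xi_xi // mulr1 subrr. Qed.

Lemma G_dvf_hidx p k : (G x *m dvf eta k x) (hidx p) 0 = hmetmx G eta x p k.
Proof.
by rewrite G_dvf mxE hmet_on // (G_sym (hidx p) ord0 Ux) -eta_G // mulrC.
Qed.

Lemma nabla_dvf_dvf i j :
  levi_civita G (dvf eta i) (dvf eta j) x
  = \sum_(k < n.*2) hchristoffel G eta x k i j *: dvf eta k x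
    - hmet G eta i j x *: e0.
Proof.
apply: (can_inj (mulKmx G_unit)); apply/colP => l.
rewrite mulmxBr mulmx_sumr -scalemxAr; under eq_bigr do rewrite -scalemxAr.
rewrite G_nabla_dvf_dvf comb_colE mulmx_ecoord.
case: (unliftP ord0 l) => [p ->|->].
- rewrite -[lift ord0 p]/(hidx p).
  under eq_bigr => k _ do rewrite G_dvf_hidx mulrC /hchristoffel mulrCA.
  rewrite -mulr_sumr (sum_mul_inverse _ _ (mulmxV hmetmx_unit)) !dpartial_hmet.
  rewrite !(hmet_on _ _ Ux) (G_sym (hidx p) ord0 Ux) -!(eta_G _ Ux).
  rewrite (G_sym (hidx i) (hidx p) Ux) (partial_eta_closed (hidx j) (hidx i)).
  rewrite (partial_eta_closed (hidx p) (hidx j)) (partial_eta_closed (hidx p) (hidx i)).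
  by field.
- under eq_bigr => k _ do rewrite G_dvf_xi mulr0.
  rewrite big1_eq G_xi_xi // -!(eta_G _ Ux) (partial_G_xi_swap (hidx j) (hidx i)).
  rewrite (partial_G_sym (hidx i) (hidx j) ord0) partial_xi_G hmet_on //.
  by field.
Qed.

End AdaptedChart.

Unset Implicit Arguments.

Theorem theorem1 (R : realType) (n : nat) (U : set 'rV[R]_(n.*2.+1))
    (Phi : 'rV[R]_(n.*2.+1) -> 'M[R]_(n.*2.+1))
    (eta : 'rV[R]_(n.*2.+1) -> 'rV[R]_(n.*2.+1))
    (xi : 'rV[R]_(n.*2.+1) -> 'cV[R]_(n.*2.+1))
    (G : 'rV[R]_(n.*2.+1) -> 'M[R]_(n.*2.+1)) :
  open U ->
  kenmotsu_on U Phi eta xi G ->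
  (forall x, U x -> xi x = (@ecoord R n ord0)) ->
  forall x, U x ->
    (forall i j : 'I_(n.*2),
       levi_civita G (dvf eta i) (dvf eta j) x
       = \sum_(k < n.*2) hchristoffel G eta x k i j *: dvf eta k x
         - hmet G eta i j x *: (@ecoord R n ord0)) /\
    (forall i : 'I_(n.*2),
       levi_civita G (fun _ => (@ecoord R n ord0)) (dvf eta i) x = dvf eta i x /\
       levi_civita G (dvf eta i) (fun _ => (@ecoord R n ord0)) x = dvf eta i x) /\
    levi_civita G (fun _ => (@ecoord R n ord0)) (fun _ => (@ecoord R n ord0)) x = 0.
Proof.
move=> openU kenmotsuU xi_coord x Ux; split; [|split; [move=> i; split|]].
- exact (nabla_dvf_dvf openU kenmotsuU xi_coord Ux).
- exact (nabla_xi_dvf openU kenmotsuU xi_coord Ux i).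
- exact (nabla_dvf_xi openU kenmotsuU xi_coord Ux i).
- exact (nabla_xi_xi openU kenmotsuU xi_coord Ux).
Qed.
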